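(* In the setting below, the quasi-cyclic code $C$ is Hermitian LCD if and only if all of the following hold: (I) $g(x)$ is self-conjugate-reciprocal; (II) $l(x)$ is self-conjugate-reciprocal; (III) $\gcd(t_{22}(x),g_{12}(x))=1$; (IV) $\gcd\big(r_{22}(x),\ g_{11}(x)\hat g_{11}(x)+g_{12}(x)\hat g_{12}(x)\big)=1$.
   Context: Let $q$ be a prime power, $F=\mathbb{F}_{q^2}$, $m\ge1$ with $\gcd(q,m)=1$, and $R=F[x]/\langle x^m-1\rangle$; elements of $R$ are represented by polynomials of degree $<m$ and identified with their coefficient vectors in $F^m$. A quasi-cyclic code of length $2m$ and index $2$ is an $R$-submodule $C\subseteq R^2$. The Hermitian inner product of $(a_1,a_2),(b_1,b_2)\in R^2$ is $\sum_k a_{1,k}b_{1,k}^q+\sum_k a_{2,k}b_{2,k}^q$, where $a_{i,k},b_{i,k}$ are the coefficients of $x^k$; $C^{\perp_h}$ is the dual with respect to it, and $C$ is Hermitian LCD if $C\cap C^{\perp_h}=\{0\}$. For $f=\sum_{k=0}^{d} f_kx^k\in F[x]$ of degree $d$, its conjugate is $f^{[q]}=\sum f_k^qx^k$, its conjugate-reciprocal is $f^{\dagger}(x)=x^{d}f^{[q]}(x^{-1})$, and $f$ is self-conjugate-reciprocal if $f^\dagger=\alpha f$ for some $\alpha\in F$. For $f$ of degree at most $m$, its conjugate transpose is $\hat f(x)=x^m f^{[q]}(x^{-1})$. Suppose $C$ is generated as an $R$-module by $(g_{11}(x),g_{12}(x))$ and $(0,g_{22}(x))$, where $g_{11},g_{12},g_{22}\in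 F[x]$ satisfy: $g_{11}\mid x^m-1$, $g_{22}\mid x^m-1$, $\deg g_{12}<\deg g_{22}$, and $g_{11}g_{22}\mid (x^m-1)g_{12}$. Define $g=\gcd(g_{11},g_{22})$, $l=(x^m-1)/\mathrm{lcm}(g_{11},g_{22})$, $g_{11}=g\,g_{11}'$, $g_{22}=g\,g_{22}'$, $r_{22}=\gcd(g_{22}',g_{22}'^{\dagger})$, $t_{22}=g_{22}'/r_{22}$. *)

From HB Require Import structures.
From mathcomp Require Import all_boot all_order all_algebra all_field.
Set Implicit Arguments. Unset Strict Implicit. Unset Printing Implicit Defensive.
Import GRing.Theory.
Local Open Scope ring_scope.

Section QC.
Variable F : finFieldType.
Variable q : nat.

Definition xm1 (m : nat) : {poly F} := 'X^m - 1.

Definition conj_poly (f : {poly F}) : {poly F} := map_poly (fun c => c ^+ q) f.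

(* conjugate-reciprocal f^dagger(x) = x^(deg f) f^[q](x^{-1}) *)
Definition conj_recip (f : {poly F}) : {poly F} :=
  \poly_(i < size f) ((f`_((size f).-1 - i)) ^+ q).

Definition scr (f : {poly F}) : Prop := exists alpha : F, conj_recip f = alpha *: f.

(* conjugate transpose hat f(x) = x^m f^[q](x^{-1}), for deg f <= m *)
Definition conj_transp (m : nat) (f : {poly F}) : {poly F} :=
  \poly_(i < m.+1) ((f`_(m - i)) ^+ q).

Definition lcm_poly (a b : {poly F}) : {poly F} := (a * b) %/ gcdp a b.

(* the quasi-cyclic code generated by (g11,g12) and (0,g22) in R^2,
   R = F[x]/<x^m-1>, elements represented by polynomials of degree < m *)
Definition qc_code (m : nat) (g11 g12 g22 : {poly F}) (c : {poly F} * {poly F}) : Prop :=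
  exists a b : {poly F},
    c = ((a * g11) %% xm1 m, (a * g12 + b * g22) %% xm1 m).

Definition herm (m : nat) (u v : {poly F} * {poly F}) : F :=
  \sum_(k < m) (u.1`_k * (v.1`_k) ^+ q + u.2`_k * (v.2`_k) ^+ q).

Definition herm_LCD (m : nat) (C : {poly F} * {poly F} -> Prop) : Prop :=
  forall c, C c -> (forall d, C d -> herm m c d = 0) -> c = (0, 0).

End QC.

From HB Require Import structures.
From mathcomp Require Import all_boot all_order all_algebra all_field.
From mathcomp Require Import ring zify.
From Stdlib Require Import Classical_Prop.
Set Implicit Arguments.
Unset Strict Implicit.
Unset Printing Implicit Defensive.
Import GRing.Theory.
Local Open Scope ring_scope.

(* Write bar u for the image of u under the ring involution of F[x]/(x^m - 1)
   sending x to x^-1 and acting on coefficients by a |-> a^q.  The Hermitian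
   product of u and v is the constant term of u * bar v, so the codeword of
   (a, b) is orthogonal to the whole code iff x^m - 1 divides herm1 a b and
   herm2 a b.  As q is prime to m, x^m - 1 is squarefree, so this and every
   coprimality condition of the statement can be checked one prime factor p
   of x^m - 1 at a time, where it becomes a boolean condition on which of g11,
   g22, g12, their conjugates and W = g11 bar g11 + g12 bar g12 are divisible
   by p.  Conjugation permutes the prime factors (p |-> pbar p) and exchanges
   divisibility of u and of bar u; the conditions at p and at pbar p together
   are equivalent to a symmetric condition whose four clauses are (I)-(IV)
   read at p. *)

Section PolyExpansion.
Variable R : comNzRingType.

Lemma poly_sum_Xn n (u : {poly R}) : (size u <= n)%N ->
  u = \sum_(j < n) u`_j *: 'X^j.
Proof.
move=> hu; rewrite -poly_def; apply/polyP => i; rewrite coef_poly.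
by case: ltnP => // h; rewrite nth_default // (leq_trans hu h).
Qed.

Lemma comp_poly_Xn n e (u : {poly R}) : (size u <= n)%N ->
  u \Po 'X^e = \sum_(j < n) u`_j *: 'X^(e * j).
Proof.
move=> hu; rewrite {1}(poly_sum_Xn hu) rmorph_sum /=.
apply: eq_bigr => j _; rewrite comp_polyZ rmorphXn /= comp_polyX.
by rewrite exprM.
Qed.

End PolyExpansion.

Section IrreducibleFactors.
Variable R : fieldType.

Lemma irredp_dvd_mul (p u v : {poly R}) : irreducible_poly p ->
  p %| u * v -> p %| u \/ p %| v.
Proof.
move=> ip huv; have [pu|npu] := boolP (p %| u); [by left | right].
by rewrite -(Gauss_dvdpr _ (_ : coprimep p u)) // irreducible_poly_coprime.
Qed.

Lemma exists_irredp_dvd (u : {poly R}) : (1 < size u)%N ->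
  exists2 p, irreducible_poly p & p %| u.
Proof.
elim: {u}_.+1 {-2}u (ltnSn (size u)) => // n IH u lt_un u_gt1.
have [irr_u|red_u] := classic (irreducible_poly u); first by exists u.
have [r [r1 ru nru]] : exists r : {poly R}, [/\ size r != 1%N, r %| u & ~~ (r %= u)].
  apply: NNPP => nex; apply: red_u; split=> // r r1 ru.
  by apply/negPn/negP => nru; apply: nex; exists r.
have u0 : u != 0 by rewrite -size_poly_eq0; case: (size u) u_gt1.
have r0 : r != 0 by apply: contraNneq u0 => r0; move: ru; rewrite r0 dvd0p.
have lt_ru : (size r < size u)%N.
  by rewrite ltn_neqAle dvdp_leq // andbT; apply: contra nru; rewrite dvdp_size_eqp.
have [|p ip pr] := IH r (leq_trans lt_ru (ltnSE lt_un)).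
  by rewrite ltn_neqAle eq_sym r1 lt0n size_poly_eq0.
by exists p => //; apply: dvdp_trans pr ru.
Qed.

End IrreducibleFactors.

Section Conjugation.
Variable F : finFieldType.
Variables q m : nat.
Hypothesis expqD : forall a b : F, (a + b) ^+ q = a ^+ q + b ^+ q.
Hypothesis expqK : forall a : F, (a ^+ q) ^+ q = a.
Hypothesis m_neq0 : (m%:R : F) != 0.

Lemma q_gt0 : (0 < q)%N.
Proof. by case: q expqK => // /(_ 0) /eqP; rewrite !expr0 oner_eq0. Qed.

Lemma m_gt0 : (0 < m)%N.
Proof. by rewrite lt0n; apply: contraNneq m_neq0 => ->. Qed.

Definition conjq (a : F) := a ^+ q.

Fact conjq_nmod : nmod_morphism conjq.
Proof. by split; [rewrite /conjq expr0n gtn_eqF ?q_gt0 | apply: expqD]. Qed.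
HB.instance Definition _ := GRing.isNmodMorphism.Build F F conjq conjq_nmod.

Fact conjq_monoid : monoid_morphism conjq.
Proof. by split; rewrite /conjq ?expr1n // => a b; rewrite exprMn. Qed.
HB.instance Definition _ := GRing.isMonoidMorphism.Build F F conjq conjq_monoid.

Lemma conjqK : involutive conjq. Proof. exact: expqK. Qed.

Lemma conjq_eq0 a : (conjq a == 0) = (a == 0).
Proof.
apply/eqP/eqP => [h|->]; last exact: rmorph0.
by rewrite -[a]conjqK h rmorph0.
Qed.

Local Notation X := (xm1 F m).
(* x^-1 = x^(m-1) in F[x]/(x^m - 1). *)
Local Notation Xinv := ('X^(m.-1) : {poly F}).

Lemma size_X : size X = m.+1. Proof. by rewrite /xm1 size_XnsubC ?m_gt0. Qed.
Lemma X_neq0 : X != 0. Proof. by rewrite -size_poly_eq0 size_X. Qed.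
Lemma size_modX (u : {poly F}) : (size (u %% X)%R <= m)%N.
Proof. by rewrite -ltnS -size_X ltn_modp X_neq0. Qed.

Definition eqm (u v : {poly F}) := X %| u - v.

Lemma eqm_refl u : eqm u u. Proof. by rewrite /eqm subrr dvdp0. Qed.
Lemma eqm_eq u v : u = v -> eqm u v. Proof. by move=> ->; apply: eqm_refl. Qed.
Lemma eqm_sym u v : eqm u v -> eqm v u.
Proof. by rewrite /eqm -opprB dvdpNr. Qed.
Lemma eqm_trans u v w : eqm u v -> eqm v w -> eqm u w.
Proof.
rewrite /eqm => h1 h2; have -> : u - w = (u - v) + (v - w) by ring.
exact: dvdp_add.
Qed.
Lemma eqmD u u' v v' : eqm u u' -> eqm v v' -> eqm (u + v) (u' + v').
Proof.
rewrite /eqm => h1 h2; have -> : u + v - (u' + v') = (u - u') + (v - v') by ring.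
exact: dvdp_add.
Qed.
Lemma eqmM u u' v v' : eqm u u' -> eqm v v' -> eqm (u * v) (u' * v').
Proof.
rewrite /eqm => h1 h2; have -> : u * v - u' * v' = (u - u') * v + u' * (v - v') by ring.
by apply: dvdp_add; [apply: dvdp_mulr | apply: dvdp_mull].
Qed.
Lemma eqm_mod u : eqm (u %% X) u.
Proof.
rewrite /eqm {2}(divp_eq u X).
have -> : u %% X - (u %/ X * X + u %% X) = - (u %/ X) * X by ring.
exact: dvdp_mull.
Qed.
Lemma eqm0 u : eqm u 0 = (X %| u). Proof. by rewrite /eqm subr0. Qed.
Lemma eqm_dvd p u v : p %| X -> eqm u v -> (p %| u) = (p %| v).
Proof.
move=> pX /(dvdp_trans pX) h; apply/idP/idP => h2.
  by have := dvdp_sub h2 h; rewrite opprB addrC subrK.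
by have := dvdp_add h h2; rewrite subrK.
Qed.

Lemma dvdX_Xn_sub a b : (a = b %[mod m])%N -> X %| 'X^a - 'X^b.
Proof.
wlog le_ba : a b / (b <= a)%N.
  move=> W h; case: (leqP b a) => hab; first exact: W.
  by rewrite -opprB dvdpNr; apply: W (ltnW hab) _.
move=> h; have [k ->] : exists k, a = (b + k * m)%N.
  exists ((a - b) %/ m)%N; rewrite divnK ?subnKC //.
  by rewrite -eqn_mod_dvd // h.
rewrite exprD -{2}(mulr1 'X^b) -mulrBr; apply: dvdp_mull.
by rewrite mulnC exprM subrX1; apply: dvdp_mulr.
Qed.

Lemma eqm_sum_Xn n (c : nat -> F) (a b : nat -> nat) :
  (forall j, (j < n)%N -> (a j = b j %[mod m])%N) ->
  eqm (\sum_(j < n) c j *: 'X^(a j)) (\sum_(j < n) c j *: 'X^(b j)).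
Proof.
move=> h; rewrite /eqm -sumrB.
apply: (big_ind (fun p => X %| p)) => [|x y|j _]; [exact: dvdp0 | exact: dvdp_add|].
by rewrite -scalerBr -mul_polyC; apply/dvdp_mull/dvdX_Xn_sub/h.
Qed.

Lemma eqm_comp_Xn e (u : {poly F}) : (e = 1 %[mod m])%N -> eqm (u \Po 'X^e) u.
Proof.
move=> he; rewrite (comp_poly_Xn _ (leqnn (size u))).
rewrite [X in eqm _ X](poly_sum_Xn (leqnn (size u))).
under [X in eqm _ X]eq_bigr do rewrite -[j in 'X^j]mul1n.
by apply: eqm_sum_Xn => j _; rewrite -modnMml he modnMml.
Qed.

Definition bar (u : {poly F}) : {poly F} := map_poly conjq u \Po Xinv.

Lemma barD u v : bar (u + v) = bar u + bar v.
Proof. by rewrite /bar rmorphD comp_polyD. Qed.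
Lemma barB u v : bar (u - v) = bar u - bar v.
Proof. by rewrite /bar rmorphB comp_polyB. Qed.
Lemma barM u v : bar (u * v) = bar u * bar v.
Proof. by rewrite /bar rmorphM comp_polyM. Qed.
Lemma bar1 : bar 1 = 1.
Proof. by rewrite /bar rmorph1 comp_polyC. Qed.
Lemma bar0 : bar 0 = 0.
Proof. by rewrite /bar rmorph0 comp_polyC. Qed.
Lemma barXn j : bar 'X^j = 'X^(m.-1 * j).
Proof. by rewrite /bar map_polyXn rmorphXn /= comp_polyX exprM. Qed.

Lemma bar_expand n (u : {poly F}) : (size u <= n)%N ->
  bar u = \sum_(j < n) conjq u`_j *: 'X^(m.-1 * j).
Proof.
move=> hu; rewrite /bar (comp_poly_Xn _ (_ : size (map_poly conjq u) <= n)%N) ?size_map_poly //.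
by apply: eq_bigr => j _; rewrite coef_map.
Qed.

Lemma dvdX_barX : X %| bar X.
Proof.
rewrite barB barXn bar1 -(expr0 'X); apply: dvdX_Xn_sub.
by rewrite modnMl mod0n.
Qed.

Lemma eqm_bar u v : eqm u v -> eqm (bar u) (bar v).
Proof. by rewrite /eqm -barB => /dvdpP [k ->]; rewrite barM dvdp_mull // dvdX_barX. Qed.

Lemma barK u : eqm (bar (bar u)) u.
Proof.
rewrite /bar map_comp_poly map_polyXn -map_poly_comp.
rewrite (@eq_map_poly _ _ _ idfun); last exact: conjqK.
rewrite map_poly_id // -comp_polyA rmorphXn /= comp_polyX -exprM; apply: eqm_comp_Xn.
case: m m_gt0 => // n _ /=.
by apply/eqP; rewrite -(eqn_modDr n) addnC -mulnS modnMl add1n modnn.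
Qed.

Definition cterm (u : {poly F}) : F := (u %% X)`_0.

Lemma cterm_eqm u v : eqm u v -> cterm u = cterm v.
Proof.
rewrite /eqm /cterm => /modp_eq0 h.
by have -> : u %% X = v %% X by apply/eqP; rewrite -subr_eq0 -modpN -modpD h.
Qed.
Lemma ctermD u v : cterm (u + v) = cterm u + cterm v.
Proof. by rewrite /cterm modpD coefD. Qed.
Lemma ctermZ c u : cterm (c *: u) = c * cterm u.
Proof. by rewrite /cterm modpZl coefZ. Qed.
Lemma cterm0 : cterm 0 = 0.
Proof. by rewrite /cterm mod0p coef0. Qed.
Lemma cterm_sum n (f : 'I_n -> {poly F}) :
  cterm (\sum_(i < n) f i) = \sum_(i < n) cterm (f i).
Proof. exact: (big_morph cterm ctermD cterm0). Qed.

Lemma cterm_Xn e : cterm 'X^e = ((e %% m)%N == 0%N)%:R.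
Proof.
rewrite (@cterm_eqm _ 'X^(e %% m)); last by apply: dvdX_Xn_sub; rewrite modn_mod.
rewrite /cterm modp_small ?coefXn ?size_X ?size_polyXn ?ltnS ?ltn_pmod ?m_gt0 //.
by rewrite eq_sym.
Qed.

Lemma cterm_mul_barXn (u : {poly F}) j : (size u <= m)%N -> (j < m)%N ->
  cterm (u * bar 'X^j) = u`_j.
Proof.
move=> hu hj; rewrite {1}(poly_sum_Xn hu) barXn mulr_suml cterm_sum.
have Xn_cterm i : (i < m)%N -> cterm 'X^(i + m.-1 * j) = (i == j)%:R.
  move=> hi; rewrite cterm_Xn; congr (_%:R); case: m hj hi => // n hj hi /=.
  have -> : ((i + n * j) %% n.+1 == 0)%N = (i + n * j == 0 %[mod n.+1])%N.
    by rewrite mod0n.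
  rewrite -(eqn_modDr j) add0n -addnA -mulSnr addnC mulnC modnMDl.
  by rewrite !modn_small.
under eq_bigr do rewrite -scalerAl -exprD ctermZ Xn_cterm //.
rewrite (bigD1 (Ordinal hj)) //= eqxx mulr1 big1 ?addr0 // => i /negbTE ij.
by rewrite -val_eqE /= in ij; rewrite ij mulr0.
Qed.

Lemma sum_conjq_cterm (u v : {poly F}) : (size u <= m)%N -> (size v <= m)%N ->
  \sum_(k < m) u`_k * (v`_k) ^+ q = cterm (u * bar v).
Proof.
move=> hu hv; rewrite (bar_expand hv) mulr_sumr cterm_sum.
apply: eq_bigr => k _; rewrite -scalerAr ctermZ -barXn cterm_mul_barXn //.
by rewrite mulrC.
Qed.

Lemma eq0_cterm_mul_barXn (u : {poly F}) :
  (forall k, (k < m)%N -> cterm (u * bar 'X^k) = 0) -> X %| u.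
Proof.
move=> h; apply/modp_eq0P; rewrite (poly_sum_Xn (size_modX u)) big1 // => k _.
rewrite -cterm_mul_barXn ?size_modX // (@cterm_eqm _ (u * bar 'X^k)) ?h ?scale0r //.
exact: eqmM (eqm_mod u) (eqm_refl _).
Qed.

Definition pfactor (p : {poly F}) := [/\ p %| X, (1 < size p)%N &
  forall u v, p %| u * v -> p %| u \/ p %| v].

Lemma pfactor_dvdX p : pfactor p -> p %| X. Proof. by case. Qed.

Lemma irredp_pfactor p : irreducible_poly p -> p %| X -> pfactor p.
Proof. by move=> ip pX; split=> // [|u v]; [case: ip | apply: irredp_dvd_mul]. Qed.

Lemma pfactor_dvd_mul p u v : pfactor p -> (p %| u * v) = (p %| u) || (p %| v).
Proof.
case=> _ _ pP; apply/idP/orP => [/pP //|].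
by case=> h; [apply: dvdp_mulr | apply: dvdp_mull].
Qed.

Lemma pfactor_ndvd1 p : pfactor p -> ~~ (p %| 1).
Proof. by case=> _ hs _; rewrite dvdp1 neq_ltn hs orbT. Qed.

Lemma pfactor_ndvdXn p j : pfactor p -> ~~ (p %| 'X^j).
Proof.
move=> hp; elim: j => [|j IH]; first by rewrite expr0 pfactor_ndvd1.
rewrite exprS pfactor_dvd_mul // negb_or IH andbT; apply: contra (pfactor_ndvd1 hp).
move=> hX; have : p %| 'X^m by rewrite -(prednK m_gt0) exprS dvdp_mulr.
by move/dvdp_sub/(_ (pfactor_dvdX hp)); rewrite opprB addrC subrK.
Qed.

(* x^m - 1 is separable: its derivative m x^(m-1) is a unit times a power of x. *)
Lemma pfactor_sq_ndvdX p : pfactor p -> ~~ (p * p %| X).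
Proof.
move=> hp; apply/negP => /dvdpP [k hk].
have : p %| X^`().
  rewrite hk !derivM; apply: dvdp_add; first by apply/dvdp_mull/dvdp_mull/dvdpp.
  by apply/dvdp_mull/dvdp_add; [apply/dvdp_mull | apply/dvdp_mulr]; apply: dvdpp.
rewrite derivB derivXn derivC subr0 -scaler_nat dvdpZr //.
exact/negP/pfactor_ndvdXn.
Qed.

Lemma pfactor_ndvd_cofactors p u v : pfactor p -> u * v %| X -> p %| u -> p %| v -> False.
Proof.
move=> hp uvX pu pv; have := pfactor_sq_ndvdX hp.
by rewrite (dvdp_trans (dvdp_mul pu pv) uvX).
Qed.

Lemma dvdX_pfactors u : (forall p, pfactor p -> p %| u) -> X %| u.
Proof.
move=> h; set G := gcdp X u; set d := X %/ G.
have hX : X = d * G by rewrite /d divpK // dvdp_gcdl.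
have d0 : d != 0 by apply: contraNneq X_neq0 => e; rewrite hX e mul0r.
have [d_le1|/exists_irredp_dvd [p ip pd]] := leqP (size d) 1.
  have /size_poly1P [c c0 dc] : size d == 1%N by rewrite eqn_leq d_le1 lt0n size_poly_eq0.
  by rewrite hX dc mul_polyC dvdpZl // dvdp_gcdr.
have pX : pfactor p by apply: irredp_pfactor; rewrite // hX dvdp_mulr.
have pG : p %| G by rewrite dvdp_gcd pfactor_dvdX // h.
by case: (pfactor_ndvd_cofactors pX (_ : d * G %| X) pd pG); rewrite -hX.
Qed.

Lemma dvdp_pfactors d e : d %| X -> (forall p, pfactor p -> p %| d -> p %| e) -> d %| e.
Proof.
move=> dX h; set c := X %/ d; have hX : X = c * d by rewrite /c divpK.
have c0 : c != 0 by apply: contraNneq X_neq0 => c0; rewrite hX c0 mul0r.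
rewrite -(dvdp_mul2l _ _ c0) -hX; apply: dvdX_pfactors => p hp.
have [pd|npd] := boolP (p %| d); first by rewrite dvdp_mull ?h.
have : (p %| c) || (p %| d) by rewrite -pfactor_dvd_mul // -hX pfactor_dvdX.
by rewrite (negPf npd) orbF => /dvdp_mulr ->.
Qed.

Lemma coprimep_pfactors d w : d %| X ->
  coprimep d w <-> (forall p, pfactor p -> p %| d -> ~~ (p %| w)).
Proof.
move=> dX; split => [/coprimepP h p hp pd|h].
  apply/negP => /(h p pd) /eqp_size; rewrite size_poly1.
  by case: hp => _ + _ => /[swap] ->.
apply: contraT => /negbTE ncop.
have d0 : d != 0 by apply: contraTneq dX => ->; rewrite dvd0p X_neq0.
have : (1 < size (gcdp d w))%N.
  by rewrite ltn_neqAle eq_sym -/(coprimep d w) ncop lt0n size_poly_eq0 gcdp_eq0 negb_and d0.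
move=> /exists_irredp_dvd [p ip pg].
have pd : p %| d by apply: dvdp_trans pg (dvdp_gcdl _ _).
have /h /(_ pd) : pfactor p by apply: irredp_pfactor => //; apply: dvdp_trans pd dX.
by rewrite (dvdp_trans pg (dvdp_gcdr _ _)).
Qed.

Lemma pfactor_dvd_divp p u v : pfactor p -> v %| u -> u %| X ->
  (p %| u %/ v) = (p %| u) && ~~ (p %| v).
Proof.
move=> hp vu uX; have hu : u = u %/ v * v by rewrite divpK.
apply/idP/andP => [h|[]].
  split; first exact: dvdp_trans h (divp_dvd vu).
  by apply/negP => pv; apply: (pfactor_ndvd_cofactors hp _ h pv); rewrite -hu.
by rewrite {1}hu pfactor_dvd_mul // => /orP [//|->].
Qed.

Lemma eqm_conj_recip (u : {poly F}) :
  eqm ('X^((size u).-1) * bar u) (conj_recip q u).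
Proof.
rewrite /conj_recip poly_def (bar_expand (leqnn _)) mulr_sumr.
rewrite [X in eqm _ X](reindex_inj rev_ord_inj) /=.
have e (i : 'I_(size u)) : ((size u).-1 - (size u - i.+1) = i)%N.
  by have := ltn_ord i; lia.
under [X in eqm _ X]eq_bigr do rewrite e; clear e.
under eq_bigr do rewrite -scalerAr -exprD.
apply: (@eqm_sum_Xn _ (fun j => conjq u`_j)
  (fun j => (size u).-1 + m.-1 * j)%N (fun j => size u - j.+1)%N) => j hj.
apply/eqP; rewrite -(eqn_modDr j) -addnA -mulSnr prednK ?m_gt0 //.
rewrite [(_ + m * j)%N]addnC mulnC modnMDl.
by move: (size u) hj => s hs; have -> : (s - j.+1 + j = s.-1)%N by lia.
Qed.

Lemma eqm_conj_transp (u : {poly F}) : (size u <= m.+1)%N ->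
  eqm (conj_transp q m u) (bar u).
Proof.
move=> hu; rewrite /conj_transp poly_def (bar_expand hu).
rewrite (reindex_inj rev_ord_inj) /=.
have e (i : 'I_m.+1) : (m - (m.+1 - i.+1) = i)%N by have := ltn_ord i; lia.
under eq_bigr do rewrite e; clear e.
apply: (@eqm_sum_Xn _ (fun j => conjq u`_j)
  (fun j => m.+1 - j.+1)%N (fun j => m.-1 * j)%N) => j hj.
apply/eqP; rewrite -(eqn_modDr j) -mulSnr prednK ?m_gt0 // mulnC modnMl.
have -> : (m.+1 - j.+1 + j = m)%N by lia.
by rewrite modnn.
Qed.

Lemma pfactor_dvd_conj_recip p u : pfactor p -> (p %| conj_recip q u) = (p %| bar u).
Proof.
move=> hp; rewrite -(eqm_dvd (pfactor_dvdX hp) (eqm_conj_recip u)).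
by rewrite pfactor_dvd_mul // (negPf (pfactor_ndvdXn _ hp)).
Qed.

Lemma conj_recip_neq0 (f : {poly F}) : f != 0 -> conj_recip q f != 0.
Proof.
move=> f0; apply/eqP => /(congr1 (fun z : {poly F} => z`_0)).
rewrite coef_poly lt0n size_poly_eq0 f0 subn0 coef0 => /eqP.
by rewrite -/(conjq _) conjq_eq0 -lead_coefE lead_coef_eq0 (negPf f0).
Qed.

(* bar p is only determined modulo x^m - 1; the gcd picks the prime factor. *)
Definition pbar p := gcdp X (bar p).

Lemma pbar_dvd p u : pfactor p -> (pbar p %| u) = (p %| bar u).
Proof.
move=> hp; apply/idP/idP.
  have [[s t] /= e] := Bezoutp X (bar p).
  rewrite /pbar -(eqp_dvdl _ e) => /dvdpP [k ->].
  rewrite !barM barD !barM; apply/dvdp_mull/dvdp_add; apply: dvdp_mull.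
    exact: dvdp_trans (pfactor_dvdX hp) dvdX_barX.
  by rewrite (eqm_dvd (pfactor_dvdX hp) (barK p)) dvdpp.
move=> /dvdpP [w hw].
have h : eqm u (bar w * bar p) by rewrite -barM -hw; apply/eqm_sym/barK.
rewrite -(subrK (bar w * bar p) u); apply: dvdp_add.
  exact: dvdp_trans (dvdp_gcdl _ _) h.
exact/dvdp_mull/dvdp_gcdr.
Qed.

Lemma pbar_dvd_bar p u : pfactor p -> (pbar p %| bar u) = (p %| u).
Proof. by move=> hp; rewrite pbar_dvd // (eqm_dvd (pfactor_dvdX hp) (barK u)). Qed.

Lemma pfactor_pbar p : pfactor p -> pfactor (pbar p).
Proof.
move=> hp; split; first exact: dvdp_gcdl.
  have : pbar p != 0 by rewrite /pbar gcdp_eq0 negb_and X_neq0.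
  rewrite -size_poly_eq0; case e: (size (pbar p)) => [|[|n]] // _.
  have : pbar p %| 1 by rewrite dvdp1 e.
  by rewrite pbar_dvd // bar1 (negPf (pfactor_ndvd1 hp)).
by move=> u v; rewrite !pbar_dvd // barM pfactor_dvd_mul // => /orP.
Qed.

Lemma scr_pfactors f : f %| X ->
  scr q f <-> forall p, pfactor p -> (p %| f) = (p %| bar f).
Proof.
move=> fX; have f0 : f != 0 by apply: contraTneq fX => ->; rewrite dvd0p X_neq0.
split=> [[a ha] p hp|h].
  rewrite -pfactor_dvd_conj_recip // ha dvdpZr //.
  by apply: contraNneq (conj_recip_neq0 f0) => a0; rewrite ha a0 scale0r.
have fd : f %| conj_recip q f.
  by apply: dvdp_pfactors => // p hp; rewrite pfactor_dvd_conj_recip // -h.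
have : size f == size (conj_recip q f).
  by rewrite eqn_leq dvdp_leq ?conj_recip_neq0 //= size_poly.
rewrite (dvdp_size_eqp fd) => /eqpP [[c1 c2] /andP [c10 c20] /= e].
by exists (c1 / c2); rewrite mulrC -scalerA e scalerA mulVf // scale1r.
Qed.

Section Code.
Variables g11 g12 g22 : {poly F}.

Definition codeword a b : {poly F} * {poly F} :=
  ((a * g11) %% X, (a * g12 + b * g22) %% X).
Definition herm1 a b := a * g11 * bar g11 + (a * g12 + b * g22) * bar g12.
Definition herm2 a b := (a * g12 + b * g22) * bar g22.

Lemma herm_codeword a b a' b' :
  herm q m (codeword a b) (codeword a' b') = cterm (bar a' * herm1 a b + bar b' * herm2 a b).
Proof.
rewrite /herm big_split /= !sum_conjq_cterm ?size_modX // -ctermD.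
apply: cterm_eqm; rewrite /herm1 /herm2.
apply: eqm_trans (_ : eqm _ (a * g11 * (bar a' * bar g11) +
   (a * g12 + b * g22) * (bar a' * bar g12 + bar b' * bar g22))) _.
  apply: eqmD; apply: eqmM; rewrite ?eqm_mod // -?barM -?barD;
    by apply: eqm_bar; apply: eqm_mod.
by apply: eqm_eq; ring.
Qed.

Lemma herm_LCD_iff : herm_LCD q m (qc_code m g11 g12 g22) <->
  (forall a b, X %| herm1 a b -> X %| herm2 a b ->
     X %| a * g11 /\ X %| a * g12 + b * g22).
Proof.
split=> [hL a b h1 h2 | h c [a [b ->]] hd].
  have /pair_equal_spec [/modp_eq0P ? /modp_eq0P ?] : codeword a b = (0, 0).
    apply: hL; first by exists a, b.
    move=> d [a' [b' ->]]; rewrite -/(codeword a' b') herm_codeword -cterm0.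
    apply: cterm_eqm; rewrite -eqm0 in h1; rewrite -eqm0 in h2.
    by apply: eqm_trans (eqmD (eqmM (eqm_refl _) h1) (eqmM (eqm_refl _) h2)) _;
      rewrite !mulr0 addr0; apply: eqm_refl.
  by [].
have [||/modp_eq0P -> /modp_eq0P -> //] := h a b; apply: eq0_cterm_mul_barXn => k hk.
- by rewrite mulrC -[_ * _]addr0 -(mul0r (herm2 a b)) -bar0 -herm_codeword hd //;
    exists 'X^k, 0.
- by rewrite mulrC -[_ * _]add0r -(mul0r (herm1 a b)) -bar0 -herm_codeword hd //;
    exists 0, 'X^k.
Qed.

Hypothesis g11_dvdX : g11 %| X.
Hypothesis g22_dvdX : g22 %| X.
Hypothesis g11g22_dvd : g11 * g22 %| X * g12.

Lemma pfactor_dvd_g12 p : pfactor p -> p %| g11 -> p %| g22 -> p %| g12.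
Proof.
move=> hp /dvdpP [a ea] /dvdpP [b eb].
set e := X %/ p; have hX : X = e * p by rewrite /e divpK // pfactor_dvdX.
have p0 : p != 0 by apply: contraTneq (pfactor_dvdX hp) => ->; rewrite dvd0p X_neq0.
move: g11g22_dvd; rewrite ea eb hX.
rewrite (_ : a * p * (b * p) = (a * b * p) * p); last by ring.
rewrite (_ : e * p * g12 = (e * g12) * p); last by ring.
rewrite dvdp_mul2r // => /(dvdp_trans (dvdp_mull _ (dvdpp p))).
rewrite pfactor_dvd_mul // => /orP [pe|//]; exfalso.
by apply: (pfactor_ndvd_cofactors hp _ (dvdpp p) pe); rewrite hX mulrC.
Qed.

Lemma pfactor_dvd_bar_g12 p : pfactor p -> p %| bar g11 -> p %| bar g22 -> p %| bar g12.
Proof. by move=> hp; rewrite -!pbar_dvd //; apply/pfactor_dvd_g12/pfactor_pbar. Qed.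

Definition local_LCD p := forall a b, p %| herm1 a b -> p %| herm2 a b ->
  p %| a * g11 /\ p %| a * g12 + b * g22.

Lemma LCD_local :
  (forall a b, X %| herm1 a b -> X %| herm2 a b -> X %| a * g11 /\ X %| a * g12 + b * g22)
  <-> (forall p, pfactor p -> local_LCD p).
Proof.
split=> [h p hp a b h1 h2|h a b h1 h2]; last first.
  have loc p : pfactor p -> p %| a * g11 /\ p %| a * g12 + b * g22.
    by move=> hp; apply: (h p hp); apply: dvdp_trans (pfactor_dvdX hp) _.
  by split; apply: dvdX_pfactors => p /loc [].
set e := X %/ p; have hX : X = e * p by rewrite /e divpK // pfactor_dvdX.
have npe : ~~ (p %| e).
  by apply/negP => pe; apply: (pfactor_ndvd_cofactors hp _ (dvdpp p) pe); rewrite hX mulrC.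
(* Multiplying by the cofactor e of p lifts divisibility by p to divisibility by x^m - 1. *)
have lift u : p %| u -> X %| e * u.
  move=> pu; apply: dvdX_pfactors => p' hp'.
  have : p' %| e * p by rewrite -hX pfactor_dvdX.
  rewrite !pfactor_dvd_mul // => /orP [->//|p'p].
  by rewrite (dvdp_trans p'p pu) orbT.
have [] := h (e * a) (e * b).
- by rewrite (_ : herm1 _ _ = e * herm1 a b) ?lift // /herm1; ring.
- by rewrite (_ : herm2 _ _ = e * herm2 a b) ?lift // /herm2; ring.
rewrite -!mulrA -mulrDr => /(dvdp_trans (pfactor_dvdX hp)) + /(dvdp_trans (pfactor_dvdX hp)).
by rewrite !pfactor_dvd_mul // (negPf npe).
Qed.

Definition W := g11 * bar g11 + g12 * bar g12.

(* Read A, B, C as "p divides g11, g22, g12", A', B', C' likewise for the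
   conjugates, and w as "p divides W". *)
Definition lcd_cond (A B C A' B' C' w : bool) :=
  [&& (~~ A && ~~ B) ==> (~~ A' && ~~ B'), (A && ~~ B) ==> ~~ (C' && B')
    & (~~ A && B) ==> (w ==> (~~ C && ~~ B'))].

Definition lcd_at p := lcd_cond (p %| g11) (p %| g22) (p %| g12)
  (p %| bar g11) (p %| bar g22) (p %| bar g12) (p %| W).

Lemma local_LCD_lcd_at p : pfactor p -> local_LCD p -> lcd_at p.
Proof.
move=> hp hL; apply/and3P; split; apply/implyP.
- case/andP => nA nB; case hA': (p %| bar g11); case hB': (p %| bar g22) => //=.
  + have [] := hL 1 0; last by rewrite mul1r (negPf nA).
    * rewrite (_ : herm1 1 0 = W) ?dvdp_add ?dvdp_mull ?pfactor_dvd_bar_g12 //.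
      by rewrite /herm1 /W; ring.
    * by rewrite (_ : herm2 1 0 = g12 * bar g22) ?dvdp_mull // /herm2; ring.
  + have [] := hL g22 (- g12); last by rewrite pfactor_dvd_mul // (negPf nA) (negPf nB).
    * by rewrite (_ : herm1 _ _ = g22 * g11 * bar g11) ?dvdp_mull // /herm1; ring.
    * by rewrite (_ : herm2 _ _ = 0) ?dvdp0 // /herm2; ring.
  + have [] := hL (- (g22 * bar g12)) W.
    * by rewrite (_ : herm1 _ _ = 0) ?dvdp0 // /herm1 /W; ring.
    * rewrite (_ : herm2 _ _ = g22 * g11 * bar g11 * bar g22) ?dvdp_mull //.
      by rewrite /herm2 /W; ring.
    rewrite (_ : - (g22 * bar g12) * g12 + W * g22 = g22 * g11 * bar g11).
      by rewrite !pfactor_dvd_mul // (negPf nA) (negPf nB) hA'.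
    by rewrite /W; ring.
- case/andP => hA nB; apply/negP => /andP [hC' hB'].
  have [] := hL 0 1; last by move=> _; rewrite mul0r add0r mul1r (negPf nB).
  + by rewrite (_ : herm1 0 1 = g22 * bar g12) ?dvdp_mull // /herm1; ring.
  + by rewrite (_ : herm2 0 1 = g22 * bar g22) ?dvdp_mull // /herm2; ring.
- case/andP => nA hB; apply/implyP => hw; rewrite -negb_or; apply/negP => hCB.
  have [] := hL 1 0; last by rewrite mul1r (negPf nA).
  + by rewrite (_ : herm1 1 0 = W) // /herm1 /W; ring.
  + rewrite (_ : herm2 1 0 = g12 * bar g22); last by rewrite /herm2; ring.
    by rewrite pfactor_dvd_mul // orbC.
Qed.

Lemma lcd_at_local_LCD p : pfactor p -> lcd_at p -> local_LCD p.
Proof.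
move=> hp /and3P [L1 L2 L3] a b h1 h2.
have h2' : (p %| a * g12 + b * g22) || (p %| bar g22) by rewrite -pfactor_dvd_mul.
case hA : (p %| g11); case hB : (p %| g22); rewrite ?hA ?hB /= in L1 L2 L3.
- split; first exact: dvdp_mull.
  by rewrite dvdp_add ?dvdp_mull ?pfactor_dvd_g12.
- split; first exact: dvdp_mull.
  move: h1; rewrite /herm1 dvdp_addr; last by rewrite dvdp_mulr ?dvdp_mull.
  rewrite pfactor_dvd_mul // => /orP [//|hC'].
  by move: h2'; case: (p %| _ + _) => //= hB'; rewrite hC' hB' in L2.
- have hW : p %| a * W.
    rewrite (_ : a * W = herm1 a b - b * g22 * bar g12); last by rewrite /herm1 /W; ring.
    by apply: dvdp_sub => //; apply/dvdp_mulr/dvdp_mull; rewrite hB.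
  have hG : p %| a * (g12 * bar g22).
    rewrite (_ : a * _ = herm2 a b - b * g22 * bar g22); last by rewrite /herm2; ring.
    by apply: dvdp_sub => //; apply/dvdp_mulr/dvdp_mull; rewrite hB.
  have [pa|npa] := boolP (p %| a); first by split; [|apply: dvdp_add; [|apply: dvdp_mull]]; rewrite ?dvdp_mulr.
  rewrite pfactor_dvd_mul // (negPf npa) /= in hW.
  rewrite !pfactor_dvd_mul // (negPf npa) /= in hG.
  by move: L3; rewrite hW /=; case/orP: hG => ->; rewrite ?andbF.
- case/andP: L1 => nA' nB'.
  have hc : p %| a * g12 + b * g22 by move: h2'; rewrite (negPf nB') orbF.
  split=> //; move: h1; rewrite /herm1 dvdp_addl; last exact: dvdp_mulr.
  by rewrite pfactor_dvd_mul // (negPf nA') orbF.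
Qed.

Definition sym_cond (A B C A' B' C' w : bool) :=
  [&& (A && B) == (A' && B'), (~~ A && ~~ B) == (~~ A' && ~~ B'),
      (B && ~~ A && ~~ (B' && ~~ A')) ==> ~~ C & (B && ~~ A && B' && ~~ A') ==> ~~ w].

Definition sym_at p := sym_cond (p %| g11) (p %| g22) (p %| g12)
  (p %| bar g11) (p %| bar g22) (p %| bar g12) (p %| W).

Lemma lcd_cond_pair A B C A' B' C' w : (A && B ==> C) -> (A' && B' ==> C') ->
  ((A || A') && (C || C') ==> w) ->
  lcd_cond A B C A' B' C' w && lcd_cond A' B' C' A B C w =
  sym_cond A B C A' B' C' w && sym_cond A' B' C' A B C w.
Proof. by case: A; case: B; case: C; case: A'; case: B'; case: C'; case: w. Qed.

Lemma pfactor_dvd_W p : pfactor p ->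
  (p %| g11) || (p %| bar g11) -> (p %| g12) || (p %| bar g12) -> p %| W.
Proof.
move=> hp /orP hA /orP hC.
by case: hA => hA; case: hC => hC; apply: dvdp_add; by [apply: dvdp_mulr | apply: dvdp_mull].
Qed.

Lemma eqm_bar_W : eqm (bar W) W.
Proof.
rewrite /W barD !barM.
apply: (eqm_trans (eqmD (eqmM (eqm_refl _) (barK g11)) (eqmM (eqm_refl _) (barK g12)))).
by apply: eqm_eq; ring.
Qed.

(* At pbar p the seven booleans are those at p with u and bar u exchanged. *)
Lemma lcd_at_pbar p : pfactor p ->
  lcd_at p && lcd_at (pbar p) = sym_at p && sym_at (pbar p).
Proof.
move=> hp; have e1 u : (pbar p %| u) = (p %| bar u) by rewrite pbar_dvd.
have e2 u : (pbar p %| bar u) = (p %| u) by rewrite pbar_dvd_bar.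
have e3 : (pbar p %| W) = (p %| W).
  by rewrite e1 (eqm_dvd (pfactor_dvdX hp) eqm_bar_W).
rewrite /lcd_at /sym_at e3 !e2 !e1; apply: lcd_cond_pair.
- by apply/implyP => /andP [h1 h2]; apply: pfactor_dvd_g12.
- by apply/implyP => /andP [h1 h2]; apply: pfactor_dvd_bar_g12.
- by apply/implyP => /andP [h1 h2]; apply: pfactor_dvd_W.
Qed.

Lemma lcd_at_sym_at : (forall p, pfactor p -> lcd_at p) <-> (forall p, pfactor p -> sym_at p).
Proof.
split=> h p hp; have hp' := pfactor_pbar hp; have := lcd_at_pbar hp.
  by rewrite !h // => /esym /andP [].
by rewrite !h // => /andP [].
Qed.

Hypothesis g12_size : (size g12 < size g22)%N.

Definition gg := gcdp g11 g22.
Definition g22' := g22 %/ gg.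
Definition r22 := gcdp g22' (conj_recip q g22').
Definition t22 := g22' %/ r22.
Definition ll := X %/ lcm_poly g11 g22.

Lemma gg_dvdX : gg %| X. Proof. exact: dvdp_trans (dvdp_gcdl _ _) g11_dvdX. Qed.
Lemma g22'_dvdX : g22' %| X. Proof. exact: dvdp_trans (divp_dvd (dvdp_gcdr _ _)) g22_dvdX. Qed.
Lemma r22_dvdX : r22 %| X. Proof. exact: dvdp_trans (dvdp_gcdl _ _) g22'_dvdX. Qed.
Lemma t22_dvdX : t22 %| X. Proof. exact: dvdp_trans (divp_dvd (dvdp_gcdl _ _)) g22'_dvdX. Qed.

Lemma lcm_g11_g22 : lcm_poly g11 g22 = g11 * g22'.
Proof. by rewrite /lcm_poly /g22' divp_mulA // dvdp_gcdr. Qed.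

Lemma lcm_dvdX : lcm_poly g11 g22 %| X.
Proof.
have g11_0 : g11 != 0 by apply: contraTneq g11_dvdX => ->; rewrite dvd0p X_neq0.
have gg0 : gg != 0 by rewrite gcdp_eq0 negb_and g11_0.
rewrite lcm_g11_g22 -(divpKC g11_dvdX) dvdp_mul2l //.
have cop : coprimep g22' (g11 %/ gg) by rewrite coprimep_sym coprimep_div_gcd ?g11_0.
rewrite -(Gauss_dvdpr _ cop) -(dvdp_mul2r _ _ gg0) mulrAC /g22' !divpK ?dvdp_gcdr ?dvdp_gcdl //.
by rewrite divpKC.
Qed.

Lemma ll_dvdX : ll %| X. Proof. exact: divp_dvd lcm_dvdX. Qed.

Lemma pfactor_dvd_gg p : (p %| gg) = (p %| g11) && (p %| g22). Proof. exact: dvdp_gcd. Qed.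

Lemma pfactor_dvd_g22' p : pfactor p -> (p %| g22') = (p %| g22) && ~~ (p %| g11).
Proof.
move=> hp; rewrite /g22' pfactor_dvd_divp ?dvdp_gcdr // pfactor_dvd_gg.
by case: (p %| g22); case: (p %| g11).
Qed.

Lemma pfactor_dvd_ll p : pfactor p -> (p %| ll) = ~~ (p %| g11) && ~~ (p %| g22).
Proof.
move=> hp; rewrite /ll pfactor_dvd_divp ?lcm_dvdX ?dvdpp // (pfactor_dvdX hp).
rewrite lcm_g11_g22 pfactor_dvd_mul // pfactor_dvd_g22' //.
by case: (p %| g22); case: (p %| g11).
Qed.

Lemma scr_gg_iff : scr q gg <-> forall p, pfactor p ->
  (p %| g11) && (p %| g22) == (p %| bar g11) && (p %| bar g22).
Proof.
rewrite scr_pfactors ?gg_dvdX //; split => h p hp.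
  by rewrite -pfactor_dvd_gg h // -pbar_dvd // pfactor_dvd_gg !pbar_dvd.
by rewrite -pbar_dvd // !pfactor_dvd_gg !pbar_dvd //; apply/eqP/h.
Qed.

Lemma scr_ll_iff : scr q ll <-> forall p, pfactor p ->
  (~~ (p %| g11) && ~~ (p %| g22)) == (~~ (p %| bar g11) && ~~ (p %| bar g22)).
Proof.
have hpll p : pfactor p -> (pbar p %| ll) = ~~ (p %| bar g11) && ~~ (p %| bar g22).
  by move=> hp; rewrite (pfactor_dvd_ll (pfactor_pbar hp)) !pbar_dvd.
rewrite scr_pfactors ?ll_dvdX //; split => h p hp.
  by rewrite -pfactor_dvd_ll // h // -pbar_dvd // hpll.
by rewrite -pbar_dvd // pfactor_dvd_ll // hpll //; apply/eqP/h.
Qed.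

Lemma pfactor_dvd_r22 p : pfactor p ->
  (p %| r22) = (p %| g22) && ~~ (p %| g11) && (p %| bar g22) && ~~ (p %| bar g11).
Proof.
move=> hp; rewrite /r22 dvdp_gcd pfactor_dvd_conj_recip // -pbar_dvd //.
rewrite (pfactor_dvd_g22' (pfactor_pbar hp)) pfactor_dvd_g22' //.
by rewrite !pbar_dvd // !andbA.
Qed.

Lemma pfactor_dvd_t22 p : pfactor p ->
  (p %| t22) = (p %| g22) && ~~ (p %| g11) && ~~ ((p %| bar g22) && ~~ (p %| bar g11)).
Proof.
move=> hp; rewrite /t22 pfactor_dvd_divp ?dvdp_gcdl ?g22'_dvdX //.
rewrite pfactor_dvd_r22 // pfactor_dvd_g22' //.
by case: (p %| g22); case: (p %| g11).
Qed.

Lemma coprime_t22_iff : coprimep t22 g12 <-> forall p, pfactor p ->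
  (p %| g22) && ~~ (p %| g11) && ~~ ((p %| bar g22) && ~~ (p %| bar g11)) ==> ~~ (p %| g12).
Proof.
rewrite coprimep_pfactors ?t22_dvdX //.
split=> h p hp; last by rewrite (pfactor_dvd_t22 hp); apply/implyP/h.
by apply/implyP; rewrite -(pfactor_dvd_t22 hp); apply: h.
Qed.

Lemma eqm_W : eqm (g11 * conj_transp q m g11 + g12 * conj_transp q m g12) W.
Proof.
have s22 : (size g22 <= m.+1)%N by rewrite -size_X dvdp_leq // X_neq0.
apply: eqmD; apply: eqmM; try exact: eqm_refl; apply: eqm_conj_transp.
  by rewrite -size_X dvdp_leq // X_neq0.
exact: leq_trans (ltnW g12_size) s22.
Qed.

Lemma coprime_r22_iff :
  coprimep r22 (g11 * conj_transp q m g11 + g12 * conj_transp q m g12) <->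
  forall p, pfactor p ->
  (p %| g22) && ~~ (p %| g11) && (p %| bar g22) && ~~ (p %| bar g11) ==> ~~ (p %| W).
Proof.
rewrite coprimep_pfactors ?r22_dvdX //; split=> h p hp.
  by apply/implyP; rewrite -(pfactor_dvd_r22 hp) -(eqm_dvd (pfactor_dvdX hp) eqm_W); apply: h.
by rewrite (pfactor_dvd_r22 hp) (eqm_dvd (pfactor_dvdX hp) eqm_W); apply/implyP/h.
Qed.

Lemma herm_LCD_iff_conditions : herm_LCD q m (qc_code m g11 g12 g22) <->
  [/\ scr q gg, scr q ll, coprimep t22 g12 &
      coprimep r22 (g11 * conj_transp q m g11 + g12 * conj_transp q m g12)].
Proof.
apply: (iff_trans herm_LCD_iff); apply: (iff_trans LCD_local).
apply: (iff_trans (_ : _ <-> forall p, pfactor p -> lcd_at p)).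
  by split=> h p hp; [apply: local_LCD_lcd_at | apply: lcd_at_local_LCD] => //; apply: h.
apply: (iff_trans lcd_at_sym_at); split=> [h | [hI hII hIII hIV] p hp].
  split; [apply/scr_gg_iff | apply/scr_ll_iff | apply/coprime_t22_iff | apply/coprime_r22_iff];
    by move=> p hp; case/and4P: (h p hp).
apply/and4P; split; [exact: (scr_gg_iff.1 hI) | exact: (scr_ll_iff.1 hII) |
  exact: (coprime_t22_iff.1 hIII) | exact: (coprime_r22_iff.1 hIV)].
Qed.

End Code.
End Conjugation.

Lemma expDn_pchar_pow (F : finFieldType) p k : p \in [pchar F] ->
  forall a b : F, (a + b) ^+ (p ^ k) = a ^+ (p ^ k) + b ^+ (p ^ k).
Proof.
move=> pc a b; apply: exprDn_pchar.
by rewrite pnatX (pnatE _ (pcharf_prime pc)) pc.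
Qed.

Lemma expf_card_sqrt (F : finFieldType) q : #|F| = (q ^ 2)%N ->
  forall a : F, (a ^+ q) ^+ q = a.
Proof. by move=> hF a; rewrite -exprM -[(q * q)%N]/(q ^ 2)%N -hF expf_card. Qed.

Lemma natr_neq0_coprime_pchar (F : finFieldType) p k m : p \in [pchar F] ->
  (0 < k)%N -> coprime (p ^ k) m -> (m%:R : F) != 0.
Proof.
move=> pc k0; rewrite coprime_pexpl // prime_coprime ?(pcharf_prime pc) //.
by rewrite (dvdn_pcharf pc).
Qed.

Theorem theorem6p3 (F : finFieldType) (q m : nat)
  (hq : exists p k : nat, [/\ prime p, (0 < k)%N & q = (p ^ k)%N])
  (hF : #|F| = (q ^ 2)%N)
  (hm : (1 <= m)%N) (hqm : coprime q m)
  (g11 g12 g22 : {poly F})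
  (h11 : g11 %| xm1 F m) (h22 : g22 %| xm1 F m)
  (h12 : (size g12 < size g22)%N)
  (hdiv : g11 * g22 %| xm1 F m * g12) :
  let g := gcdp g11 g22 in
  let l := xm1 F m %/ lcm_poly g11 g22 in
  let g11' := g11 %/ g in
  let g22' := g22 %/ g in
  let r22 := gcdp g22' (conj_recip q g22') in
  let t22 := g22' %/ r22 in
  herm_LCD q m (qc_code m g11 g12 g22) <->
  [/\ scr q g, scr q l, coprimep t22 g12 &
      coprimep r22 (g11 * conj_transp q m g11 + g12 * conj_transp q m g12)].
Proof.
(* hm is implied by m%:R != 0. *)
have [p [k [pp k0 eq_q]]] := hq.
have pc : p \in [pchar F].
  by apply: (card_finPcharP (n := (k * 2)%N)); rewrite // hF eq_q expnM.
have expqD : forall a b : F, (a + b) ^+ q = a ^+ q + b ^+ q.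
  by rewrite eq_q; apply: expDn_pchar_pow.
have m_neq0 : (m%:R : F) != 0.
  by apply: (natr_neq0_coprime_pchar pc k0); rewrite -eq_q.
exact: (herm_LCD_iff_conditions expqD (expf_card_sqrt hF) m_neq0 h11 h22 hdiv h12).
Qed.
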